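(* Consider the equality problem (E) and algorithm PIR2, and suppose the algorithm terminates at iteration $k^*$ because $\Delta^{k^*}=\nabla^{k^*}$ (with $J^{k^*}\neq\emptyset$). Let $L$ be the set of indices fixed at their lower bounds during iterations $k<k^*$ (i.e. the union of $L^k$ over iterations with $\nabla^k>\Delta^k$) together with $L^{k^*}$, and $U$ the analogous set for upper bounds. Define $\rho_j:=\phi_j'(l_j)+\mu^{k^*}a_j$ for $j\in L$, $\rho_j:=0$ for $j\notin L$, $\lambda_j:=-\phi_j'(u_j)-\mu^{k^*}a_j$ for $j\in U$, and $\lambda_j:=0$ for $j\notin U$. Then $\rho_j\ge0$ and $\lambda_j\ge0$ for all $j\in J$.
   Context: Let $J=\{1,\dots,n\}$. Problem (E): minimize $\sum_{j\in J}\phi_j(x_j)$ subject to $\sum_{j\in J}a_jx_j=b$, $l_j\le x_j\le u_j$ ($j\in J$), where each $\phi_j:\mathbb{R}\to\mathbb{R}$ is strictly convex and continuously differentiable with $\phi_j'$ a bijection of $\mathbb{R}$ onto $\mathbb{R}$, $a_j>0$, $-\infty<l_j<u_j<\infty$, and (E) has an optimal solution. Algorithm PIR2 for (E): set $J^1:=J$, $b^1:=b$, $k:=1$. At iteration $k$, let $(\hat{\mathbf{x}}^k,\mu^k)$ be the unique pair with $\phi_j'(\hat x_j^k)+\mu^ka_j=0$ for $j\in J^k$ and $\sum_{j\in J^k}a_j\hat x^k_j=b^k$ (the solution and multiplier of the problem restricted to $J^k$ with right-hand side $b^k$ and no bound constraints). Let $L^k:=\{j\in J^k:\hat x^k_j\le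 l_j\}$, $U^k:=\{j\in J^k:\hat x^k_j\ge u_j\}$, $\nabla^k:=\sum_{j\in L^k}a_j(l_j-\hat x_j^k)$, $\Delta^k:=\sum_{j\in U^k}a_j(\hat x_j^k-u_j)$. If $\Delta^k=\nabla^k$, stop ($k^*:=k$) and set $x_j=l_j$ on $L^k$, $x_j=u_j$ on $U^k$, $x_j=\hat x_j^k$ on the rest of $J^k$. If $\nabla^k>\Delta^k$, fix $x_j:=l_j$ for $j\in L^k$, set $J^{k+1}:=J^k\setminus L^k$, $b^{k+1}:=b^k-\sum_{j\in L^k}a_jl_j$. If $\nabla^k<\Delta^k$, fix $x_j:=u_j$ for $j\in U^k$, set $J^{k+1}:=J^k\setminus U^k$, $b^{k+1}:=b^k-\sum_{j\in U^k}a_ju_j$. If $J^{k+1}=\emptyset$ stop; otherwise increase $k$ by one and repeat. *)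

From Stdlib Require Import Reals Lra List Arith Bool.
Open Scope R_scope.

Fixpoint rsum (n : nat) (f : nat -> R) : R :=
  match n with
  | O => 0
  | S m => rsum m f + f m
  end.

Definition Rleb (x y : R) : bool := if Rle_dec x y then true else false.
Definition Rltb (x y : R) : bool := if Rlt_dec x y then true else false.

(* Index set J = {0,...,n-1}; subsets of it are boolean predicates on nat. *)

Definition inL (Jk : nat -> bool) (xh l : nat -> R) (j : nat) : bool :=
  Jk j && Rleb (xh j) (l j).
Definition inU (Jk : nat -> bool) (xh u : nat -> R) (j : nat) : bool :=
  Jk j && Rleb (u j) (xh j).

Definition nablaF (n : nat) (a l : nat -> R) (Jk : nat -> bool) (xh : nat -> R) : R :=
  rsum n (fun j => if inL Jk xh l j then a j * (l j - xh j) else 0).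
Definition deltaF (n : nat) (a u : nat -> R) (Jk : nat -> bool) (xh : nat -> R) : R :=
  rsum n (fun j => if inU Jk xh u j then a j * (xh j - u j) else 0).

Definition feasibleE (n : nat) (a l u : nat -> R) (b : R) (x : nat -> R) : Prop :=
  rsum n (fun j => a j * x j) = b /\ (forall j, (j < n)%nat -> l j <= x j <= u j).
Definition optimalE (n : nat) (phi : nat -> R -> R) (a l u : nat -> R) (b : R)
    (x : nat -> R) : Prop :=
  feasibleE n a l u b x /\
  forall y, feasibleE n a l u b y ->
    rsum n (fun j => phi j (x j)) <= rsum n (fun j => phi j (y j)).

(* A run of algorithm PIR2 (iterations numbered 1..kstar) that stops at
   iteration kstar because Delta^kstar = nabla^kstar.
   Jk k  : the index set J^k,   bk k : right-hand side b^k,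
   xh k  : the unrestricted solution \hat x^k,  mu k : multiplier mu^k.
   dphi j is the derivative phi_j'. *)
Definition PIR2_run_stops_balanced (n : nat) (dphi : nat -> R -> R)
    (a l u : nat -> R) (b : R)
    (Jk : nat -> nat -> bool) (bk : nat -> R) (xh : nat -> nat -> R) (mu : nat -> R)
    (kstar : nat) : Prop :=
  (1 <= kstar)%nat /\
  (forall j, Jk 1%nat j = Nat.ltb j n) /\ bk 1%nat = b /\
  (* at each iteration, (xh k, mu k) solves the unbounded restricted problem *)
  (forall k, (1 <= k <= kstar)%nat ->
     (forall j, Jk k j = true -> dphi j (xh k j) + mu k * a j = 0) /\
     rsum n (fun j => if Jk k j then a j * xh k j else 0) = bk k) /\
  (forall k, (1 <= k < kstar)%nat ->
     let nab := nablaF n a l (Jk k) (xh k) in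
     let del := deltaF n a u (Jk k) (xh k) in
     del <> nab /\
     (nab > del ->
        (forall j, Jk (S k) j = Jk k j && negb (inL (Jk k) (xh k) l j)) /\
        bk (S k) = bk k - rsum n (fun j => if inL (Jk k) (xh k) l j then a j * l j else 0)) /\
     (nab < del ->
        (forall j, Jk (S k) j = Jk k j && negb (inU (Jk k) (xh k) u j)) /\
        bk (S k) = bk k - rsum n (fun j => if inU (Jk k) (xh k) u j then a j * u j else 0)) /\
     (exists j, Jk (S k) j = true)) /\
  deltaF n a u (Jk kstar) (xh kstar) = nablaF n a l (Jk kstar) (xh kstar) /\
  (exists j, Jk kstar j = true).

Definition finalL (n : nat) (a l u : nat -> R) (Jk : nat -> nat -> bool)
    (xh : nat -> nat -> R) (kstar : nat) (j : nat) : bool :=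
  existsb (fun k => Rltb (deltaF n a u (Jk k) (xh k)) (nablaF n a l (Jk k) (xh k))
                    && inL (Jk k) (xh k) l j)
          (seq 1 (kstar - 1))
  || inL (Jk kstar) (xh kstar) l j.
Definition finalU (n : nat) (a l u : nat -> R) (Jk : nat -> nat -> bool)
    (xh : nat -> nat -> R) (kstar : nat) (j : nat) : bool :=
  existsb (fun k => Rltb (nablaF n a l (Jk k) (xh k)) (deltaF n a u (Jk k) (xh k))
                    && inU (Jk k) (xh k) u j)
          (seq 1 (kstar - 1))
  || inU (Jk kstar) (xh kstar) u j.

Definition rhoF (n : nat) (dphi : nat -> R -> R) (a l u : nat -> R)
    (Jk : nat -> nat -> bool) (xh : nat -> nat -> R) (mu : nat -> R) (kstar j : nat) : R :=
  if finalL n a l u Jk xh kstar j then dphi j (l j) + mu kstar * a j else 0.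
Definition lambdaF (n : nat) (dphi : nat -> R -> R) (a l u : nat -> R)
    (Jk : nat -> nat -> bool) (xh : nat -> nat -> R) (mu : nat -> R) (kstar j : nat) : R :=
  if finalU n a l u Jk xh kstar j then - dphi j (u j) - mu kstar * a j else 0.

(* Let x_i(m) solve phi_i'(x) = -m a_i and let g_J(m) = clipped_sum J m be the sum over J of a_i times
   x_i(m) clamped to [l_i, u_i]; g_J is nonincreasing in m.  At iteration k,
   g_{J^k}(mu^k) = b^k + nabla^k - Delta^k, and fixing L^k (resp. U^k) leaves g unchanged
   for m >= mu^k (resp. m <= mu^k) up to the constant moved into b^{k+1}.  The stopping
   test gives g_{J^{k*}}(mu^{k*}) = b^{k*}, and a backward induction shows
   g_{J^k}(mu^{k*}) = b^k together with mu^k <= mu^{k*} when L^k was fixed and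
   mu^{k*} <= mu^k when U^k was fixed.  For j in L^k this yields
   phi_j'(l_j) >= phi_j'(xhat^k_j) = -mu^k a_j >= -mu^{k*} a_j, i.e. rho_j >= 0, and
   symmetrically lambda_j >= 0. *)

From Stdlib Require Import Reals Lra List Arith Bool Lia ClassicalEpsilon.
Open Scope R_scope.

Lemma rsum_ext n f g : (forall j, (j < n)%nat -> f j = g j) -> rsum n f = rsum n g.
Proof.
  induction n as [|n IH]; intros Hfg; simpl; [reflexivity|].
  rewrite IH by (intros; apply Hfg; lia). rewrite Hfg by lia. reflexivity.
Qed.

Lemma rsum_le n f g : (forall j, (j < n)%nat -> f j <= g j) -> rsum n f <= rsum n g.
Proof.
  induction n as [|n IH]; intros Hfg; simpl; [lra|].
  assert (rsum n f <= rsum n g) by (apply IH; intros; apply Hfg; lia).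
  assert (f n <= g n) by (apply Hfg; lia).
  lra.
Qed.

Lemma rsum_plus n f g : rsum n (fun j => f j + g j) = rsum n f + rsum n g.
Proof. induction n as [|n IH]; simpl; [lra|]. rewrite IH. ring. Qed.

Lemma rsum_minus n f g : rsum n (fun j => f j - g j) = rsum n f - rsum n g.
Proof. induction n as [|n IH]; simpl; [lra|]. rewrite IH. ring. Qed.

Lemma Rleb_cases x y : (Rleb x y = true /\ x <= y) \/ (Rleb x y = false /\ y < x).
Proof. unfold Rleb; destruct (Rle_dec x y); [left|right]; split; auto; lra. Qed.

Lemma Rleb_true x y : Rleb x y = true -> x <= y.
Proof. destruct (Rleb_cases x y) as [[_ H]|[-> _]]; [intros; exact H|discriminate]. Qed.

Lemma Rltb_true x y : Rltb x y = true -> x < y.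
Proof. unfold Rltb; destruct (Rlt_dec x y); [auto|discriminate]. Qed.

Definition strictly_convex (f : R -> R) : Prop :=
  forall x y t, x <> y -> 0 < t < 1 -> f (t * x + (1 - t) * y) < t * f x + (1 - t) * f y.

Lemma le_of_forall_lt_eps (A B c : R) :
  0 < c -> (forall eps, 0 < eps -> A < B + eps * c) -> A <= B.
Proof.
  intros Hc H. apply Rnot_lt_le. intros HBA.
  specialize (H ((A - B) / c) ltac:(apply Rdiv_lt_0_compat; lra)) as Hgap.
  replace ((A - B) / c * c) with (A - B) in Hgap by (field; lra). lra.
Qed.

Lemma convex_tangent_le (f df : R -> R) (x z : R) :
  derivable_pt_lim f x (df x) -> strictly_convex f -> f x + df x * (z - x) <= f z.
Proof.
  intros Hder Hconv.
  destruct (Req_dec z x) as [->|Hzx]; [lra|].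
  set (d := z - x).
  assert (Hd : 0 < Rabs d) by (apply Rabs_pos_lt; unfold d; lra).
  enough (df x * d <= f z - f x) by lra.
  apply (le_of_forall_lt_eps _ _ (Rabs d) Hd). intros eps Heps.
  destruct (Hder eps Heps) as [del Hdel].
  set (t := Rmin (1 / 2) (del / (2 * Rabs d))).
  assert (Ht0 : 0 < t).
  { apply Rmin_glb_lt; [lra|]. apply Rdiv_lt_0_compat; [apply cond_pos|lra]. }
  assert (Ht1 : t <= 1 / 2) by apply Rmin_l.
  assert (Htd : t * Rabs d < del).
  { assert (t * Rabs d <= del / 2).
    { replace (del / 2) with (del / (2 * Rabs d) * Rabs d) by (field; lra).
      apply Rmult_le_compat_r; [lra|apply Rmin_r]. }
    pose proof (cond_pos del). lra. }
  set (h := t * d).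
  assert (Hh0 : h <> 0) by (apply Rmult_integral_contrapositive; split; unfold d; lra).
  assert (Hh : Rabs h < del) by (unfold h; rewrite Rabs_mult, (Rabs_right t) by lra; lra).
  specialize (Hdel h Hh0 Hh).
  set (q := (f (x + h) - f x) / h) in Hdel.
  (* convexity on the chord [x, z] bounds the difference quotient along d *)
  assert (Hchord : q * d < f z - f x).
  { assert (f (x + h) < t * f z + (1 - t) * f x).
    { replace (x + h) with (t * z + (1 - t) * x) by (unfold h, d; ring). apply Hconv; lra. }
    replace (q * d) with ((f (x + h) - f x) / t) by (unfold q, h; field; split; unfold d; lra).
    apply (Rmult_lt_reg_l t); [lra|]. unfold Rdiv. rewrite <- Rmult_assoc,
      (Rmult_comm t), Rmult_assoc, Rinv_r, Rmult_1_r by lra. lra. }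
  assert (Hclose : Rabs (q * d - df x * d) < eps * Rabs d).
  { rewrite <- Rmult_minus_distr_r, Rabs_mult. apply Rmult_lt_compat_r; assumption. }
  apply Rabs_def2 in Hclose. lra.
Qed.

Lemma convex_tangent_lt (f df : R -> R) (x z : R) :
  derivable_pt_lim f x (df x) -> strictly_convex f -> z <> x ->
  f x + df x * (z - x) < f z.
Proof.
  intros Hder Hconv Hzx.
  set (w := (x + z) / 2).
  assert (Hmid : f w < / 2 * f x + (1 - / 2) * f z).
  { replace w with (/ 2 * x + (1 - / 2) * z) by (unfold w; field). apply Hconv; lra. }
  pose proof (convex_tangent_le f df x w Hder Hconv) as Htan.
  replace (w - x) with ((z - x) / 2) in Htan by (unfold w; field). lra.
Qed.

Lemma convex_derivative_increasing (f df : R -> R) (x y : R) :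
  derivable_pt_lim f x (df x) -> derivable_pt_lim f y (df y) -> strictly_convex f ->
  x < y -> df x < df y.
Proof.
  intros Hderx Hdery Hconv Hxy.
  pose proof (convex_tangent_lt f df x y Hderx Hconv ltac:(lra)).
  pose proof (convex_tangent_lt f df y x Hdery Hconv ltac:(lra)).
  apply (Rmult_lt_reg_r (y - x)); lra.
Qed.

Definition clamp (lo hi x : R) : R := Rmax lo (Rmin hi x).

Lemma clamp_le_compat lo hi x y : x <= y -> clamp lo hi x <= clamp lo hi y.
Proof. intros. unfold clamp, Rmax, Rmin. repeat destruct Rle_dec; lra. Qed.

Lemma clamp_below lo hi x : lo <= hi -> x <= lo -> clamp lo hi x = lo.
Proof. intros. unfold clamp, Rmax, Rmin. repeat destruct Rle_dec; lra. Qed.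

Lemma clamp_above lo hi x : lo <= hi -> hi <= x -> clamp lo hi x = hi.
Proof. intros. unfold clamp, Rmax, Rmin. repeat destruct Rle_dec; lra. Qed.

Lemma clamp_decompose lo hi x : lo <= hi ->
  clamp lo hi x = x + (if Rleb x lo then lo - x else 0) - (if Rleb hi x then x - hi else 0).
Proof.
  intros. destruct (Rleb_cases x lo) as [[-> ?]|[-> ?]];
    destruct (Rleb_cases hi x) as [[-> ?]|[-> ?]];
    unfold clamp, Rmax, Rmin; repeat destruct Rle_dec; lra.
Qed.

Lemma finalL_witness n a l u Jk xh kstar j :
  (1 <= kstar)%nat -> finalL n a l u Jk xh kstar j = true ->
  exists k, (1 <= k <= kstar)%nat /\
    ((k < kstar)%nat -> deltaF n a u (Jk k) (xh k) < nablaF n a l (Jk k) (xh k)) /\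
    inL (Jk k) (xh k) l j = true.
Proof.
  intros Hk Hfin. apply orb_true_iff in Hfin as [Hex|Hlast].
  - apply existsb_exists in Hex as (k & Hin & Hsel). apply in_seq in Hin.
    apply andb_true_iff in Hsel as [Hlt HinL].
    exists k. repeat split; try lia; auto. intros _. apply Rltb_true, Hlt.
  - exists kstar. repeat split; try lia; auto.
Qed.

Lemma finalU_witness n a l u Jk xh kstar j :
  (1 <= kstar)%nat -> finalU n a l u Jk xh kstar j = true ->
  exists k, (1 <= k <= kstar)%nat /\
    ((k < kstar)%nat -> nablaF n a l (Jk k) (xh k) < deltaF n a u (Jk k) (xh k)) /\
    inU (Jk k) (xh k) u j = true.
Proof.
  intros Hk Hfin. apply orb_true_iff in Hfin as [Hex|Hlast].
  - apply existsb_exists in Hex as (k & Hin & Hsel). apply in_seq in Hin.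
    apply andb_true_iff in Hsel as [Hlt HinU].
    exists k. repeat split; try lia; auto. intros _. apply Rltb_true, Hlt.
  - exists kstar. repeat split; try lia; auto.
Qed.

Section ClippedSum.

Variables (n : nat) (dphi : nat -> R -> R) (a l u : nat -> R).
Hypothesis dphi_increasing : forall i, (i < n)%nat -> forall x y, x < y -> dphi i x < dphi i y.
Hypothesis dphi_surjective : forall i, (i < n)%nat -> forall y, exists x, dphi i x = y.
Hypothesis a_nonneg : forall i, (i < n)%nat -> 0 <= a i.
Hypothesis l_le_u : forall i, (i < n)%nat -> l i <= u i.

Definition stationary (J : nat -> bool) (x : nat -> R) (m : R) : Prop :=
  forall i, J i = true -> dphi i (x i) + m * a i = 0.

Definition xhat (i : nat) (m : R) : R :=
  epsilon (inhabits 0) (fun x => dphi i x = - m * a i).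

Definition clipped_sum (J : nat -> bool) (m : R) : R :=
  rsum n (fun i => if J i then a i * clamp (l i) (u i) (xhat i m) else 0).

Lemma dphi_le i x y : (i < n)%nat -> x <= y -> dphi i x <= dphi i y.
Proof.
  intros Hi [Hxy | ->]; [left; apply dphi_increasing; assumption|lra].
Qed.

Lemma xhat_spec i m : (i < n)%nat -> dphi i (xhat i m) = - m * a i.
Proof. intros Hi. unfold xhat. apply epsilon_spec, dphi_surjective, Hi. Qed.

Lemma xhat_eq i m x : (i < n)%nat -> dphi i x + m * a i = 0 -> xhat i m = x.
Proof.
  intros Hi Hx. pose proof (xhat_spec i m Hi) as Hs.
  destruct (Rtotal_order (xhat i m) x) as [Hlt|[Heq|Hgt]]; [|exact Heq|];
    [apply (dphi_increasing i Hi) in Hlt|apply (dphi_increasing i Hi) in Hgt]; lra.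
Qed.

Lemma xhat_antimono i m1 m2 : (i < n)%nat -> m1 <= m2 -> xhat i m2 <= xhat i m1.
Proof.
  intros Hi Hm. apply Rnot_lt_le. intros Hlt.
  apply (dphi_increasing i Hi) in Hlt. rewrite !xhat_spec in Hlt by exact Hi.
  pose proof (a_nonneg i Hi). nra.
Qed.

Lemma clipped_sum_antimono J m1 m2 : m1 <= m2 -> clipped_sum J m2 <= clipped_sum J m1.
Proof.
  intros Hm. apply rsum_le. intros i Hi. destruct (J i); [|lra].
  apply Rmult_le_compat_l; [exact (a_nonneg i Hi)|].
  apply clamp_le_compat, xhat_antimono; assumption.
Qed.

Lemma clipped_sum_stationary J x m : stationary J x m ->
  clipped_sum J m =
  rsum n (fun i => if J i then a i * x i else 0) + nablaF n a l J x - deltaF n a u J x.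
Proof.
  intros Hst. unfold nablaF, deltaF. rewrite <- rsum_plus, <- rsum_minus.
  apply rsum_ext. intros i Hi. unfold inL, inU.
  destruct (J i) eqn:HJ; simpl; [|lra].
  rewrite (xhat_eq i m (x i) Hi (Hst i HJ)), clamp_decompose by (apply l_le_u, Hi).
  destruct (Rleb (x i) (l i)), (Rleb (u i) (x i)); ring.
Qed.

Lemma clipped_sum_fix_lower J J' x m m' :
  stationary J x m -> (forall i, J' i = J i && negb (inL J x l i)) -> m <= m' ->
  clipped_sum J m' =
  clipped_sum J' m' + rsum n (fun i => if inL J x l i then a i * l i else 0).
Proof.
  intros Hst HJ' Hm. unfold clipped_sum. rewrite <- rsum_plus.
  apply rsum_ext. intros i Hi. rewrite HJ'. unfold inL.
  destruct (J i) eqn:HJ; simpl; [|lra].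
  destruct (Rleb (x i) (l i)) eqn:Hxl; simpl; [|lra].
  apply Rleb_true in Hxl.
  assert (xhat i m' <= x i).
  { rewrite <- (xhat_eq i m (x i) Hi (Hst i HJ)). apply xhat_antimono; assumption. }
  rewrite clamp_below by (apply l_le_u in Hi; lra). ring.
Qed.

Lemma clipped_sum_fix_upper J J' x m m' :
  stationary J x m -> (forall i, J' i = J i && negb (inU J x u i)) -> m' <= m ->
  clipped_sum J m' =
  clipped_sum J' m' + rsum n (fun i => if inU J x u i then a i * u i else 0).
Proof.
  intros Hst HJ' Hm. unfold clipped_sum. rewrite <- rsum_plus.
  apply rsum_ext. intros i Hi. rewrite HJ'. unfold inU.
  destruct (J i) eqn:HJ; simpl; [|lra].
  destruct (Rleb (u i) (x i)) eqn:Hux; simpl; [|lra].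
  apply Rleb_true in Hux.
  assert (x i <= xhat i m').
  { rewrite <- (xhat_eq i m (x i) Hi (Hst i HJ)). apply xhat_antimono; assumption. }
  rewrite clamp_above by (apply l_le_u in Hi; lra). ring.
Qed.

Lemma lower_multiplier_nonneg J x m m' j : (j < n)%nat ->
  stationary J x m -> inL J x l j = true -> m <= m' -> 0 <= dphi j (l j) + m' * a j.
Proof.
  intros Hj Hst HinL Hm. apply andb_true_iff in HinL as [HJ Hxl].
  pose proof (Hst j HJ). pose proof (dphi_le j _ _ Hj (Rleb_true _ _ Hxl)).
  pose proof (a_nonneg j Hj). nra.
Qed.

Lemma upper_multiplier_nonneg J x m m' j : (j < n)%nat ->
  stationary J x m -> inU J x u j = true -> m' <= m -> 0 <= - dphi j (u j) - m' * a j.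
Proof.
  intros Hj Hst HinU Hm. apply andb_true_iff in HinU as [HJ Hux].
  pose proof (Hst j HJ). pose proof (dphi_le j _ _ Hj (Rleb_true _ _ Hux)).
  pose proof (a_nonneg j Hj). nra.
Qed.

Section Run.

Variables (b : R) (Jk : nat -> nat -> bool) (bk : nat -> R) (xh : nat -> nat -> R)
  (mu : nat -> R) (kstar : nat).
Hypothesis run : PIR2_run_stops_balanced n dphi a l u b Jk bk xh mu kstar.

Local Notation nab k := (nablaF n a l (Jk k) (xh k)).
Local Notation del k := (deltaF n a u (Jk k) (xh k)).
Local Notation sumL k := (rsum n (fun i => if inL (Jk k) (xh k) l i then a i * l i else 0)).
Local Notation sumU k := (rsum n (fun i => if inU (Jk k) (xh k) u i then a i * u i else 0)).

Lemma run_kstar_pos : (1 <= kstar)%nat.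
Proof. destruct run as (Hk & _). exact Hk. Qed.

Lemma run_stationary k : (1 <= k <= kstar)%nat -> stationary (Jk k) (xh k) (mu k).
Proof. intros Hk. destruct run as (_ & _ & _ & Hsol & _). exact (proj1 (Hsol k Hk)). Qed.

Lemma clipped_sum_iterate k : (1 <= k <= kstar)%nat ->
  clipped_sum (Jk k) (mu k) = bk k + nab k - del k.
Proof.
  intros Hk. rewrite (clipped_sum_stationary _ _ _ (run_stationary k Hk)).
  destruct run as (_ & _ & _ & Hsol & _). rewrite (proj2 (Hsol k Hk)). reflexivity.
Qed.

Lemma run_step_unbalanced k : (1 <= k < kstar)%nat -> del k <> nab k.
Proof. intros Hk. destruct run as (_ & _ & _ & _ & Hstep & _). apply (Hstep k Hk). Qed.

Lemma run_step_lower k : (1 <= k < kstar)%nat -> del k < nab k ->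
  (forall i, Jk (S k) i = Jk k i && negb (inL (Jk k) (xh k) l i)) /\
  bk (S k) = bk k - sumL k.
Proof. intros Hk Hlt. destruct run as (_ & _ & _ & _ & Hstep & _). apply (Hstep k Hk), Hlt. Qed.

Lemma run_step_upper k : (1 <= k < kstar)%nat -> nab k < del k ->
  (forall i, Jk (S k) i = Jk k i && negb (inU (Jk k) (xh k) u i)) /\
  bk (S k) = bk k - sumU k.
Proof. intros Hk Hlt. destruct run as (_ & _ & _ & _ & Hstep & _). apply (Hstep k Hk), Hlt. Qed.

(* If mu^{k*} < mu^k, monotonicity of g_{J^(k+1)} would force nabla^k <= Delta^k. *)
Lemma lower_step_multiplier k : (1 <= k < kstar)%nat -> del k < nab k ->
  clipped_sum (Jk (S k)) (mu kstar) = bk (S k) -> mu k <= mu kstar.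
Proof.
  intros Hk Hlt Hnext. apply Rnot_lt_le. intros Hgt.
  destruct (run_step_lower k Hk Hlt) as [HJ Hb].
  pose proof (clipped_sum_iterate k ltac:(lia)).
  pose proof (clipped_sum_fix_lower _ _ _ _ (mu k)
                (run_stationary k ltac:(lia)) HJ (Rle_refl _)).
  pose proof (clipped_sum_antimono (Jk (S k)) (mu kstar) (mu k) ltac:(lra)).
  lra.
Qed.

Lemma upper_step_multiplier k : (1 <= k < kstar)%nat -> nab k < del k ->
  clipped_sum (Jk (S k)) (mu kstar) = bk (S k) -> mu kstar <= mu k.
Proof.
  intros Hk Hlt Hnext. apply Rnot_lt_le. intros Hgt.
  destruct (run_step_upper k Hk Hlt) as [HJ Hb].
  pose proof (clipped_sum_iterate k ltac:(lia)).
  pose proof (clipped_sum_fix_upper _ _ _ _ (mu k)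
                (run_stationary k ltac:(lia)) HJ (Rle_refl _)).
  pose proof (clipped_sum_antimono (Jk (S k)) (mu k) (mu kstar) ltac:(lra)).
  lra.
Qed.

Lemma clipped_sum_final k : (1 <= k <= kstar)%nat -> clipped_sum (Jk k) (mu kstar) = bk k.
Proof.
  remember (kstar - k)%nat as d eqn:Hd. revert k Hd.
  induction d as [|d IH]; intros k Hd Hk.
  - replace k with kstar by lia. rewrite clipped_sum_iterate by lia.
    destruct run as (_ & _ & _ & _ & _ & Hstop & _). lra.
  - assert (Hk' : (1 <= k < kstar)%nat) by lia.
    assert (Hnext : clipped_sum (Jk (S k)) (mu kstar) = bk (S k)) by (apply IH; lia).
    destruct (Rtotal_order (nab k) (del k)) as [Hlt|[Heq|Hgt]].
    + destruct (run_step_upper k Hk' Hlt) as [HJ Hb].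
      rewrite (clipped_sum_fix_upper _ _ _ _ _ (run_stationary k ltac:(lia)) HJ
                 (upper_step_multiplier k Hk' Hlt Hnext)).
      lra.
    + exfalso. apply (run_step_unbalanced k Hk'). symmetry. exact Heq.
    + destruct (run_step_lower k Hk' Hgt) as [HJ Hb].
      rewrite (clipped_sum_fix_lower _ _ _ _ _ (run_stationary k ltac:(lia)) HJ
                 (lower_step_multiplier k Hk' Hgt Hnext)).
      lra.
Qed.

Lemma rhoF_nonneg j : (j < n)%nat -> 0 <= rhoF n dphi a l u Jk xh mu kstar j.
Proof.
  intros Hj. unfold rhoF.
  destruct (finalL n a l u Jk xh kstar j) eqn:HL; [|lra].
  destruct (finalL_witness _ _ _ _ _ _ _ _ run_kstar_pos HL) as (k & Hk & Hlt & HinL).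
  apply (lower_multiplier_nonneg (Jk k) (xh k) (mu k)); auto using run_stationary.
  destruct (Nat.eq_dec k kstar) as [->|Hne]; [lra|].
  apply lower_step_multiplier, clipped_sum_final; try apply Hlt; lia.
Qed.

Lemma lambdaF_nonneg j : (j < n)%nat -> 0 <= lambdaF n dphi a l u Jk xh mu kstar j.
Proof.
  intros Hj. unfold lambdaF.
  destruct (finalU n a l u Jk xh kstar j) eqn:HU; [|lra].
  destruct (finalU_witness _ _ _ _ _ _ _ _ run_kstar_pos HU) as (k & Hk & Hlt & HinU).
  apply (upper_multiplier_nonneg (Jk k) (xh k) (mu k)); auto using run_stationary.
  destruct (Nat.eq_dec k kstar) as [->|Hne]; [lra|].
  apply upper_step_multiplier, clipped_sum_final; try apply Hlt; lia.
Qed.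

End Run.

End ClippedSum.

Theorem proposition6
  (n : nat) (phi dphi : nat -> R -> R) (a l u : nat -> R) (b : R)
  (Hder : forall j, (j < n)%nat -> forall x, derivable_pt_lim (phi j) x (dphi j x))
  (Hcont : forall j, (j < n)%nat -> continuity (dphi j))
  (Hconv : forall j, (j < n)%nat -> forall x y t, x <> y -> 0 < t < 1 ->
             phi j (t * x + (1 - t) * y) < t * phi j x + (1 - t) * phi j y)
  (Hinj : forall j, (j < n)%nat -> forall x y, dphi j x = dphi j y -> x = y)
  (Hsurj : forall j, (j < n)%nat -> forall y, exists x, dphi j x = y)
  (Ha : forall j, (j < n)%nat -> 0 < a j)
  (Hlu : forall j, (j < n)%nat -> l j < u j)
  (Hopt : exists x, optimalE n phi a l u b x)
  (Jk : nat -> nat -> bool) (bk : nat -> R) (xh : nat -> nat -> R) (mu : nat -> R)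
  (kstar : nat)
  (Hrun : PIR2_run_stops_balanced n dphi a l u b Jk bk xh mu kstar) :
  forall j, (j < n)%nat ->
    0 <= rhoF n dphi a l u Jk xh mu kstar j /\
    0 <= lambdaF n dphi a l u Jk xh mu kstar j.
Proof.
  intros j Hj.
  assert (Hincr : forall i, (i < n)%nat -> forall x y, x < y -> dphi i x < dphi i y).
  { intros i Hi x y. apply convex_derivative_increasing with (phi i);
      [apply Hder, Hi | apply Hder, Hi | exact (Hconv i Hi)]. }
  assert (Ha0 : forall i, (i < n)%nat -> 0 <= a i) by (intros; apply Rlt_le, Ha; assumption).
  assert (Hlu' : forall i, (i < n)%nat -> l i <= u i) by (intros; apply Rlt_le, Hlu; assumption).
  split.
  - exact (rhoF_nonneg n dphi a l u Hincr Hsurj Ha0 Hlu' b Jk bk xh mu kstar Hrun j Hj).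
  - exact (lambdaF_nonneg n dphi a l u Hincr Hsurj Ha0 Hlu' b Jk bk xh mu kstar Hrun j Hj).
Qed.
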